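(* Let $G$ be a tree on vertex set $[n]$ with $m$ internal (non-leaf) vertices and maximum path length $p$ (the number of edges of a longest path in $G$). Let $\mathrm{CIM}_G=\operatorname{conv}\left(c_\mathcal{G}\colon \mathcal{G}\text{ a DAG on }[n]\text{ with skeleton } G\right)$. Then $\left\lfloor \frac{p}{2}\right\rfloor\leq \operatorname{diam}(\mathrm{CIM}_G)\leq m$.
   Context: For a directed acyclic graph (DAG) $\mathcal{G}$ on vertex set $[n]=\{1,\dots,n\}$, the characteristic imset $c_\mathcal{G}$ is the 0/1-vector indexed by the subsets $S\subseteq[n]$ with $|S|\geq 2$, with $c_\mathcal{G}(S)=1$ if there exists $i\in S$ such that $S\subseteq \mathrm{pa}_\mathcal{G}(i)\cup\{i\}$ (where $\mathrm{pa}_\mathcal{G}(i)$ is the set of parents of $i$), and $c_\mathcal{G}(S)=0$ otherwise. The skeleton of a DAG is the undirected graph with the same vertices and adjacencies. For a polytope $P$, the vertex-edge graph $G(P)$ has the vertices of $P$ as nodes, with two vertices adjacent iff their convex hull is an edge of $P$; $\operatorname{diam}(P)$ is the maximum over pairs of vertices of the length of a shortest path between them in $G(P)$. *)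

From HB Require Import structures.
From mathcomp Require Import all_boot all_order all_algebra.
Set Implicit Arguments. Unset Strict Implicit. Unset Printing Implicit Defensive.
Import Order.TTheory GRing.Theory Num.Theory.
Local Open Scope ring_scope.

Definition simple_graph (n : nat) (G : rel 'I_n) : Prop :=
  (forall x y, G x y = G y x) /\ (forall x, ~~ G x x).

Definition is_tree (n : nat) (G : rel 'I_n) : Prop :=
  simple_graph G /\ (0 < n)%N /\
  (forall x y, connect G x y) /\
  (forall s : seq 'I_n, uniq s -> (3 <= size s)%N -> ~~ cycle G s).

Definition num_internal (n : nat) (G : rel 'I_n) : nat :=
  #|[set v : 'I_n | (2 <= #|[set u | G v u]|)%N]|.

Definition longest_path_length (n : nat) (G : rel 'I_n) (p : nat) : Prop :=
  (exists (x : 'I_n) (s : seq 'I_n), uniq (x :: s) /\ path G x s /\ size s = p) /\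
  (forall (x : 'I_n) (s : seq 'I_n), uniq (x :: s) -> path G x s -> (size s <= p)%N).

(* D x y means an arrow x -> y; acyclic = no directed cycle *)
Definition is_dag (n : nat) (D : rel 'I_n) : Prop :=
  forall x y, D x y -> ~~ connect D y x.

Definition has_skeleton (n : nat) (D G : rel 'I_n) : Prop :=
  forall x y, G x y = D x y || D y x.

Definition parents (n : nat) (D : rel 'I_n) (i : 'I_n) : {set 'I_n} :=
  [set j | D j i].

Definition imset_idx (n : nat) := {S : {set 'I_n} | (1 < #|S|)%N}.

Definition point (R : realFieldType) (n : nat) := {ffun imset_idx n -> R}.

Definition char_imset (R : realFieldType) (n : nat) (D : rel 'I_n) : point R n :=
  [ffun S : imset_idx n =>
     if [exists i in val S, val S \subset (parents D i :|: [set i])] then 1 else 0].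

(* the (finite) generating set of CIM_G *)
Definition CIM_pts (R : realFieldType) (n : nat) (G : rel 'I_n) (x : point R n) : Prop :=
  exists D : rel 'I_n, is_dag D /\ has_skeleton D G /\ x = char_imset R D.

Definition dotp (R : realFieldType) (n : nat) (w x : point R n) : R :=
  \sum_(S : imset_idx n) w S * x S.

Definition in_segment (R : realFieldType) (n : nat) (u v y : point R n) : Prop :=
  exists t : R, 0 <= t <= 1 /\ y = [ffun S => t * u S + (1 - t) * v S].

Definition poly_vertex (R : realFieldType) (n : nat) (V : point R n -> Prop)
  (x : point R n) : Prop :=
  V x /\ exists w : point R n, forall y, V y -> y <> x -> dotp w y < dotp w x.

Definition poly_edge (R : realFieldType) (n : nat) (V : point R n -> Prop)
  (u v : point R n) : Prop :=
  poly_vertex V u /\ poly_vertex V v /\ u <> v /\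
  exists w : point R n,
    dotp w u = dotp w v /\
    (forall y, V y -> dotp w y <= dotp w u) /\
    (forall y, V y -> dotp w y = dotp w u -> in_segment u v y).

Definition has_walk (R : realFieldType) (n : nat) (V : point R n -> Prop)
  (u v : point R n) (k : nat) : Prop :=
  exists f : nat -> point R n, f 0%N = u /\ f k = v /\
    forall i, (i < k)%N -> poly_edge V (f i) (f i.+1).

Definition graph_dist (R : realFieldType) (n : nat) (V : point R n -> Prop)
  (u v : point R n) (k : nat) : Prop :=
  has_walk V u v k /\ forall j, has_walk V u v j -> (k <= j)%N.

Definition is_diam (R : realFieldType) (n : nat) (V : point R n -> Prop) (d : nat) : Prop :=
  (forall u v, poly_vertex V u -> poly_vertex V v ->
     exists k, graph_dist V u v k /\ (k <= d)%N) /\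
  (exists u v, poly_vertex V u /\ poly_vertex V v /\ graph_dist V u v d).

(* For a tree skeleton the acyclic orientations are exactly the antisymmetric
   ones, and the characteristic imset of [D] is determined by the parent sets of
   size at least two.  By Moebius inversion over subsets of neighbourhoods, every
   map [D |-> sum_z f_z (pa_D z)] with [f_z] vanishing on sets of size at most one
   is a linear functional of [c_D].  Taking for [f_z] the indicator that the large
   part of [pa z] is one of two prescribed sets exposes, for two vertices [c_D1]
   and [c_D2], the face of the orientations agreeing with [D1] or [D2] at every
   vertex: either it is the edge [c_D1 c_D2], or it contains a third vertex, which
   splits the set of vertices where [D1] and [D2] differ.  Those vertices are
   internal, so the diameter is at most [m].

   For the lower bound, the number of colliders along a longest path is also a
   linear functional.  If it jumped by two along an edge [c_D1 c_D2], then some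
   path edge on which [D1] and [D2] agree would cut the tree so that exchanging
   the orientations on one side gives [D3], [D4] with [c_D3 + c_D4 = c_D1 + c_D2]
   and an intermediate number of colliders; [c_D3] would then be a 0/1 point of
   the edge other than its endpoints.  Orienting the path monotonically, resp.
   alternately, gives 0, resp. [p./2], colliders. *)

From mathcomp Require Import all_boot all_order all_algebra.
From mathcomp Require Import lra zify.
From Stdlib Require Import Classical.
Set Implicit Arguments. Unset Strict Implicit. Unset Printing Implicit Defensive.
Import Order.TTheory GRing.Theory Num.Theory.

Lemma in_parents n (D : rel 'I_n) (i j : 'I_n) : (j \in parents D i) = D j i.
Proof. by rewrite inE. Qed.

Section Orientations.
Variables (n : nat) (G : rel 'I_n).

Definition orientation (D : rel 'I_n) : Prop :=
  has_skeleton D G /\ forall x y, D x y -> ~~ D y x.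

Definition nbhd (z : 'I_n) : {set 'I_n} := [set u | G z u].

Lemma skeleton_edge D x y : has_skeleton D G -> D x y -> G x y.
Proof. by move=> skD Dxy; rewrite skD Dxy. Qed.

Lemma dag_orientation D : is_dag D -> has_skeleton D G -> orientation D.
Proof.
move=> dagD skD; split=> // x y Dxy; apply/negP => Dyx.
by move: (dagD _ _ Dxy); rewrite connect1.
Qed.

Lemma orientation_head_unique D (S : {set 'I_n}) i j : orientation D ->
  i \in S -> j \in S -> S \subset parents D i :|: [set i] ->
  S \subset parents D j :|: [set j] -> i = j.
Proof.
move=> [_ asymD] iS jS /subsetP Si /subsetP Sj; apply/eqP/negPn/negP => ij.
have := Si _ jS; rewrite !inE eq_sym (negbTE ij) orbF => Dji.
have := Sj _ iS; rewrite !inE (negbTE ij) orbF => Dij.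
by move: (asymD _ _ Dij); rewrite Dji.
Qed.

Lemma orientation_flip D x y : orientation D -> G x y -> D y x = ~~ D x y.
Proof.
case=> skD asymD; rewrite skD.
by case Dxy: (D x y) => //=; move: (asymD _ _ Dxy) => /negbTE.
Qed.

Hypothesis treeG : is_tree G.

Lemma tree_sym x y : G x y = G y x.
Proof. by case: treeG => [[]]. Qed.

Lemma tree_irrefl x : G x x = false.
Proof. by case: treeG => [[_ /(_ x) /negbTE]]. Qed.

Lemma tree_acyclic s : uniq s -> (3 <= size s)%N -> ~~ cycle G s.
Proof. by case: treeG => [_ [_ [_]]]; apply. Qed.

Lemma tree_edge_neq x y : G x y -> x != y.
Proof. by apply: contraTneq => ->; rewrite tree_irrefl. Qed.

Lemma tree_triangle_free a b c : G a b -> G b c -> G c a -> False.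
Proof.
move=> Gab Gbc Gca.
have : uniq [:: a; b; c].
  rewrite /= !inE negb_or (tree_edge_neq Gab) (tree_edge_neq Gbc) andbT /=.
  by rewrite eq_sym (tree_edge_neq Gca).
by move/tree_acyclic => /(_ isT); rewrite /cycle /= Gab Gbc Gca.
Qed.

Lemma orientation_dag D : orientation D -> is_dag D.
Proof.
case=> skD asymD x y Dxy; apply/negP => /connectP [s pth lst].
case: (shortenP pth) lst => s' pth' uq _ lst.
have xy := tree_edge_neq (skeleton_edge skD Dxy).
case: s' pth' uq lst => [|z [|z2 s'']] pth' uq lst.
- by move: xy; rewrite lst eqxx.
- rewrite /= in lst; subst z; move: pth' => /= /andP [Dyx _].
  by move: (asymD _ _ Dxy); rewrite Dyx.
- have cycD : cycle D [:: y, z, z2 & s''] by rewrite /cycle rcons_path pth' -lst Dxy.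
  have cycG : cycle G [:: y, z, z2 & s''].
    by apply: sub_cycle cycD => a b; apply: skeleton_edge.
  by move: (tree_acyclic uq); rewrite cycG => /(_ isT).
Qed.

Lemma orientation_irrefl D x : orientation D -> D x x = false.
Proof. by case=> skD _; apply/negP => /(skeleton_edge skD); rewrite tree_irrefl. Qed.

Lemma parents_sub_nbhd D z : orientation D -> parents D z \subset nbhd z.
Proof.
case=> skD _; apply/subsetP => j; rewrite in_parents inE => Djz.
by rewrite tree_sym skD Djz.
Qed.

End Orientations.

Definition big_part (T : finType) (A : {set T}) : {set T} :=
  if (1 < #|A|)%N then A else set0.

(* In a tree all pairs of parents of [z] are v-structures, so these sets record
   the v-structures of [D]. *)
Definition vparents n (D : rel 'I_n) (z : 'I_n) : {set 'I_n} := big_part (parents D z).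

Section CharImsets.
Variables (n : nat) (G : rel 'I_n) (R : realFieldType).
Local Open Scope ring_scope.

Lemma char_imsetE D (S : imset_idx n) : orientation G D ->
  char_imset R D S = \sum_(i in val S) ((val S \subset parents D i :|: [set i]) : nat)%:R.
Proof.
move=> oD; rewrite ffunE; case: existsP => [[i /andP [iS Si]] | noHead].
  rewrite (bigD1 i) //= Si big1 ?addr0 // => j /andP [jS ji].
  case Sj: (_ \subset _) => //.
  by move: ji; rewrite (orientation_head_unique oD jS iS Sj Si) eqxx.
rewrite big1 // => j jS; case Sj: (_ \subset _) => //.
by case: noHead; exists j; rewrite jS Sj.
Qed.

Lemma subsetU1_big_part D (S : {set 'I_n}) i : (2 < #|S|)%N ->
  (S \subset parents D i :|: [set i]) = (S \subset big_part (parents D i) :|: [set i]).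
Proof.
rewrite /big_part; case: ifP => // small S3; rewrite set0U.
apply/idP/idP => /subset_leq_card; last by rewrite cards1 => S1; move: (leq_trans S3 S1).
rewrite setUC cardsU1 => /(leq_trans S3).
by move: small; case: #|parents D i| => [|[|k]] //; case: (_ \notin _).
Qed.

Lemma char_imset_pair D (a b : 'I_n) : orientation G D -> a != b ->
  [exists i in [set a; b], [set a; b] \subset parents D i :|: [set i]] = G a b.
Proof.
case=> skD _ ab; rewrite skD; apply/existsP/idP.
  move=> [i /andP [iab /subsetP Sab]]; move: iab; rewrite !inE => /orP [] /eqP Ei; subst i.
    have := Sab b; rewrite !inE eqxx orbT (eq_sym b) (negbTE ab) !orbF.
    by move=> /(_ isT) ->; rewrite orbT.
  by have := Sab a; rewrite !inE eqxx (negbTE ab) !orbF => /(_ isT) ->.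
case/orP => Dab; [exists b | exists a]; rewrite !inE eqxx ?orbT /=;
  by apply/subsetP => x; rewrite !inE => /orP [] /eqP ->; rewrite ?Dab ?eqxx ?orbT.
Qed.

Lemma char_imset_vparents D E : orientation G D -> orientation G E ->
  (forall z, vparents D z = vparents E z) -> char_imset R D = char_imset R E.
Proof.
move=> oD oE eqv; apply/ffunP => -[S S2]; rewrite !ffunE /=.
case: (ltngtP #|S| 2) => [|S3|/eqP/cards2P [a [b [ab ->]]]].
- by rewrite ltnS leqNgt S2.
- congr (if _ then _ else _); apply: eq_existsb => i.
  by rewrite !(subsetU1_big_part _ _ S3); have := eqv i; rewrite /vparents => ->.
- by rewrite (char_imset_pair oD ab) (char_imset_pair oE ab).
Qed.

End CharImsets.

Section Moebius.
Variables (T : finType) (R : numDomainType).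
Local Open Scope ring_scope.

Definition toggle (a : T) (A : {set T}) : {set T} := if a \in A then A :\ a else a |: A.

Lemma toggleK a : involutive (toggle a).
Proof.
move=> A; rewrite {2}/toggle; case: ifP => aA; rewrite /toggle !inE eqxx /=.
  by rewrite setD1K.
by rewrite setU1K ?aA.
Qed.

Lemma toggle_inj a : injective (toggle a).
Proof. exact: inv_inj (toggleK a). Qed.

Lemma toggle_subset a (A B : {set T}) : a \in B -> (toggle a A \subset B) = (A \subset B).
Proof.
move=> aB; rewrite /toggle; case: ifP => aA; last by rewrite subUset sub1set aB.
by rewrite -{2}(setD1K aA) subUset sub1set aB.
Qed.

Lemma subset_toggle a (A U : {set T}) : a \notin U -> (U \subset toggle a A) = (U \subset A).
Proof.
move=> aU; rewrite /toggle; case: ifP => aA; first by rewrite subsetD1 aU andbT.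
by rewrite -{2}(setU1K (negbT aA)) subsetD1 aU andbT.
Qed.

Lemma sign_toggle a (A U : {set T}) : a \notin U ->
  (-1) ^+ #|toggle a A :\: U| = - (-1) ^+ #|A :\: U| :> R.
Proof.
move=> aU; rewrite /toggle; case: ifP => aA.
  have -> : (A :\ a) :\: U = (A :\: U) :\ a by rewrite setDDl setUC -setDDl.
  have aAU : a \in A :\: U by rewrite inE aU aA.
  by rewrite (cardsD1 a (A :\: U)) aAU exprS mulN1r opprK.
have -> : (a |: A) :\: U = a |: (A :\: U).
  by apply/setP => x; rewrite !inE; case: eqVneq => // ->; rewrite (negbTE aU).
have aAU : a \notin A :\: U by rewrite inE aA andbF.
by rewrite cardsU1 aAU exprS mulN1r.
Qed.

Lemma sum_sign_interval (U A : {set T}) : U \subset A ->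
  \sum_(B : {set T} | (B \subset A) && (U \subset B)) (-1) ^+ #|B :\: U| = (U == A)%:R :> R.
Proof.
move=> UA; have [-> | neq] := eqVneq U A.
  rewrite (big_pred1 A) ?setDv ?cards0 // => B.
  by rewrite /= eqEsubset.
have /subsetPn [a aA aU] : ~~ (A \subset U).
  by apply: contra neq => AU; rewrite eqEsubset UA AU.
set s := \sum_(B | _) _; suff ss : s = - s by apply/eqP; rewrite -eqNr -ss.
rewrite {1}/s (reindex_inj (@toggle_inj a)) /= -sumrN.
apply: eq_big => B; first by rewrite toggle_subset // subset_toggle.
by move=> _; rewrite sign_toggle.
Qed.

Definition moebius (f : {set T} -> R) (A : {set T}) : R :=
  \sum_(U : {set T} | U \subset A) (-1) ^+ #|A :\: U| * f U.

Lemma moebiusK f (A : {set T}) : \sum_(B : {set T} | B \subset A) moebius f B = f A.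
Proof.
rewrite /moebius (exchange_big_dep (fun U : {set T} => U \subset A)) /=; last first.
  by move=> B U BA UB; apply: subset_trans UB BA.
rewrite (eq_bigr (fun U => (U == A)%:R * f U)); last first.
  by move=> U UA; rewrite -big_distrl /= sum_sign_interval.
rewrite (bigD1 A) //= eqxx mul1r big1 ?addr0 // => U /andP [_ /negbTE ->].
by rewrite mul0r.
Qed.

Lemma moebius_small f (A : {set T}) : (forall U : {set T}, (#|U| <= 1)%N -> f U = 0) ->
  (#|A| <= 1)%N -> moebius f A = 0.
Proof.
move=> f0 A1; rewrite /moebius big1 // => U UA; rewrite f0 ?mulr0 //.
exact: leq_trans (subset_leq_card UA) A1.
Qed.

Lemma sum_setD1 a (h : {set T} -> R) :
  \sum_(A : {set T} | a \in A) h (A :\ a) = \sum_(A : {set T} | a \notin A) h A.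
Proof.
rewrite [RHS](reindex_inj (@toggle_inj a)) /=.
apply: eq_big => [A | A aA]; last by rewrite /toggle aA.
by rewrite /toggle; case: ifP => aA; rewrite !inE eqxx ?aA.
Qed.

End Moebius.

Lemma sum_imset_idx n (R : realFieldType) (F : {set 'I_n} -> R) :
  (\sum_(S : imset_idx n) F (val S) = \sum_(S : {set 'I_n} | (1 < #|S|)%N) F S)%R.
Proof.
symmetry; rewrite (reindex_omap (val : imset_idx n -> _) insub) => [|S S1].
  by apply: eq_bigl => -[S S1] /=; rewrite insubT /= S1 eqxx.
by rewrite insubT.
Qed.

Section LinearFunctionals.
Variables (n : nat) (G : rel 'I_n) (R : realFieldType).
Hypothesis treeG : is_tree G.
Variable f : 'I_n -> {set 'I_n} -> R.
Hypothesis f_small : forall z (U : {set 'I_n}), (#|U| <= 1)%N -> f z U = 0%R.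
Local Open Scope ring_scope.

Definition local_weight z (T : {set 'I_n}) : R :=
  ((T \subset nbhd G z) : nat)%:R * moebius (f z) T.

(* For [T \subset nbhd G z] with [#|T| >= 2], [c_D (z |: T)] is the indicator of
   [T \subset parents D z], so weighting it by the Moebius transform of [f z]
   recovers [f z (parents D z)]. *)
Definition linear_weight : point R n :=
  [ffun S : imset_idx n => \sum_(z in val S) local_weight z (val S :\ z)].

Lemma local_weight_small z (T : {set 'I_n}) : (#|T| <= 1)%N -> local_weight z T = 0.
Proof. by move=> T1; rewrite /local_weight moebius_small ?mulr0 // => U; apply: f_small. Qed.

(* Two heads [z] and [i] of [S] would form a triangle with a third element of [S]. *)
Lemma local_weight_other_head D (S : {set 'I_n}) z i : orientation G D ->
  z \in S -> i \in S -> i != z -> S \subset parents D i :|: [set i] ->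
  local_weight z (S :\ z) = 0.
Proof.
move=> [skD _] zS iS iz /subsetP Si.
case: (leqP #|S :\ z| 1) => [/local_weight_small // | big].
rewrite /local_weight; case: (boolP (S :\ z \subset nbhd G z)) => [/subsetP Snb|_]; last first.
  by rewrite mul0r.
have iSz : i \in S :\ z by rewrite !inE iz iS.
have /card_gt0P [t] : (0 < #|(S :\ z) :\ i|)%N by move: big; rewrite (cardsD1 i) iSz.
rewrite !inE => /and3P [ti tz tS].
have Gzt : G z t by have := Snb t; rewrite !inE tz tS => /(_ isT).
have Gti : G t i by rewrite skD; have := Si _ tS; rewrite !inE (negbTE ti) orbF => ->.
have Giz : G i z.
  by rewrite skD; have := Si _ zS; rewrite !inE eq_sym (negbTE iz) orbF => ->; rewrite orbT.
by case: (tree_triangle_free treeG Gzt Gti Giz).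
Qed.

Lemma linear_weight_char D (S : imset_idx n) : orientation G D ->
  linear_weight S * char_imset R D S =
  \sum_(z in val S) local_weight z (val S :\ z) * ((val S :\ z \subset parents D z) : nat)%:R.
Proof.
move=> oD; rewrite ffunE (char_imsetE R S oD) big_distrlr /=.
apply: eq_bigr => z zS; rewrite (bigD1 z) //= big1 ?addr0; first by rewrite subDset setUC.
move=> i /andP [iS iz]; case: (boolP (_ \subset _)) => Si; last by rewrite mulr0.
by rewrite (local_weight_other_head oD zS iS iz Si) mul0r.
Qed.

Lemma sum_local_weight_parents D z : orientation G D ->
  \sum_(T : {set 'I_n} | z \notin T) local_weight z T * ((T \subset parents D z) : nat)%:R =
  f z (parents D z).
Proof.
move=> oD; rewrite -(moebiusK (f z) (parents D z)) big_mkcond [RHS]big_mkcond /=.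
apply: eq_bigr => T _; case: (boolP (T \subset parents D z)) => TP; last first.
  by rewrite mulr0; case: ifP.
have zT : z \notin T.
  by apply/negP => /(subsetP TP); rewrite in_parents (orientation_irrefl treeG _ oD).
by rewrite zT mulr1 /local_weight (subset_trans TP (parents_sub_nbhd treeG _ oD)) mul1r.
Qed.

Lemma dotp_linear_weight D : orientation G D ->
  dotp linear_weight (char_imset R D) = \sum_z f z (parents D z).
Proof.
move=> oD; rewrite /dotp (eq_bigr _ (fun S _ => linear_weight_char S oD)).
rewrite (sum_imset_idx (fun S => \sum_(z in S)
  local_weight z (S :\ z) * ((S :\ z \subset parents D z) : nat)%:R)).
rewrite (exchange_big_dep xpredT) //=; apply: eq_bigr => z _.
rewrite -(sum_local_weight_parents z oD) -sum_setD1.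
rewrite [RHS](bigID (fun S : {set 'I_n} => (1 < #|S|)%N)) /= [X in _ = _ + X]big1 ?addr0.
  by apply: eq_bigl => S; rewrite andbC.
move=> S /andP [zS]; rewrite -leqNgt (cardsD1 z S) zS add1n => /ltnW S1.
by rewrite local_weight_small ?mul0r.
Qed.

End LinearFunctionals.

Section Boxes.
Variables (n : nat) (G : rel 'I_n) (R : realFieldType).
Hypothesis treeG : is_tree G.
Variables a b : 'I_n -> {set 'I_n}.
Local Open Scope ring_scope.

Definition in_box D := [forall z, (vparents D z == a z) || (vparents D z == b z)].

Definition box_indicator z (A : {set 'I_n}) : R :=
  ((big_part A == a z) || (big_part A == b z) : nat)%:R.

Definition box_weight : point R n :=
  linear_weight G (fun z A => box_indicator z A - box_indicator z set0).

Definition box_value : R := \sum_(z : 'I_n) (1 - box_indicator z set0).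

Lemma dotp_box_weight D : orientation G D -> dotp box_weight (char_imset R D) =
  \sum_z (box_indicator z (parents D z) - box_indicator z set0).
Proof.
move=> oD; apply: (dotp_linear_weight treeG _ oD) => z U U1.
by rewrite /box_indicator /big_part cards0 ltnNge U1 subrr.
Qed.

Lemma dotp_box_in D : orientation G D -> in_box D ->
  dotp box_weight (char_imset R D) = box_value.
Proof.
move=> oD /forallP inD; rewrite dotp_box_weight //; apply: eq_bigr => z _.
by have := inD z; rewrite /box_indicator /vparents => ->.
Qed.

Lemma dotp_box_out D : orientation G D -> ~~ in_box D ->
  dotp box_weight (char_imset R D) < box_value.
Proof.
move=> oD /forallPn [z0 out]; rewrite dotp_box_weight // (bigD1 z0) //= [ltRHS](bigD1 z0) //=.
have -> : box_indicator z0 (parents D z0) = 0.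
  by move: out; rewrite /box_indicator /vparents => /negbTE ->.
apply: ltr_leD; first by rewrite ltrD2r ltr01.
apply: ler_sum => z _; rewrite lerD2r /box_indicator.
by case: (_ || _); rewrite ?ler01 ?lexx.
Qed.

Lemma dotp_box_le D : orientation G D -> dotp box_weight (char_imset R D) <= box_value.
Proof.
move=> oD; case: (boolP (in_box D)) => inD; first by rewrite dotp_box_in.
exact/ltW/dotp_box_out.
Qed.

End Boxes.

Section CIMFaces.
Variables (n : nat) (G : rel 'I_n) (R : realFieldType).
Hypothesis treeG : is_tree G.
Local Notation CIM := (@CIM_pts R n G).
Local Open Scope ring_scope.

Lemma CIM_ptsP y : CIM y -> exists2 D, orientation G D & y = char_imset R D.
Proof. by case=> D [dagD [skD ->]]; exists D => //; apply: dag_orientation. Qed.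

Lemma CIM_pts_char D : orientation G D -> CIM (char_imset R D).
Proof. by move=> oD; exists D; split => //; [apply: orientation_dag oD | case: oD]. Qed.

Lemma char_imset_vertex D : orientation G D -> poly_vertex CIM (char_imset R D).
Proof.
move=> oD; split; first exact: CIM_pts_char.
exists (box_weight G R (vparents D) (vparents D)) => _ /CIM_ptsP [E oE ->] neq.
rewrite (dotp_box_in R treeG oD); last by apply/forallP => z; rewrite eqxx.
apply: (dotp_box_out R treeG oE); apply/forallP => Ebox; apply: neq.
by apply: (char_imset_vparents R oE oD) => z; have := Ebox z; rewrite orbb => /eqP.
Qed.

Lemma char_imset_edge D1 D2 : orientation G D1 -> orientation G D2 ->
  char_imset R D1 <> char_imset R D2 ->
  (forall E, orientation G E -> in_box (vparents D1) (vparents D2) E ->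
     char_imset R E = char_imset R D1 \/ char_imset R E = char_imset R D2) ->
  poly_edge CIM (char_imset R D1) (char_imset R D2).
Proof.
move=> o1 o2 neq face; do 2 (split; first exact: char_imset_vertex); split => //.
exists (box_weight G R (vparents D1) (vparents D2)).
rewrite !(dotp_box_in R treeG) //; try by apply/forallP => z; rewrite eqxx ?orbT.
split => //; split => [_ /CIM_ptsP [E oE ->] | _ /CIM_ptsP [E oE ->] top].
  exact: (dotp_box_le R treeG _ _ oE).
case: (boolP (in_box (vparents D1) (vparents D2) E)) => Ebox; last first.
  by move: (dotp_box_out R treeG oE Ebox); rewrite top ltxx.
case: (face E oE Ebox) => ->; [exists 1 | exists 0]; rewrite ?ler01 ?lexx; split => //;
  by apply/ffunP => S; rewrite [in RHS]ffunE; lra.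
Qed.

End CIMFaces.

Lemma ex_minn_prop (P : nat -> Prop) :
  (exists k, P k) -> exists k, P k /\ forall j, P j -> (k <= j)%N.
Proof.
move=> [k Pk]; elim: k {-2}k (leqnn k) Pk => [|N IH] k kN Pk.
  by exists k; split => // j _; move: kN; rewrite leqn0 => /eqP ->.
case: (classic (exists2 j, P j & (j < k)%N)) => [[j Pj jk] | noSmaller].
  by apply: (IH j) => //; rewrite -ltnS (leq_trans jk kN).
exists k; split => // j Pj; rewrite leqNgt; apply/negP => jk; apply: noSmaller.
by exists j.
Qed.

Lemma ex_maxn_prop (P : nat -> Prop) m : (exists k, P k) ->
  (forall k, P k -> (k <= m)%N) -> exists k, P k /\ forall j, P j -> (j <= k)%N.
Proof.
move=> [k0 Pk0] ub.
have [_ [[k [Pk ->]] kmin]] := ex_minn_prop (P := fun i => exists k, P k /\ i = (m - k)%N)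
  (ex_intro _ _ (ex_intro _ k0 (conj Pk0 erefl))).
exists k; split => // j Pj; have := kmin (m - j)%N (ex_intro _ j (conj Pj erefl)).
by have := ub _ Pj; have := ub _ Pk; lia.
Qed.

Section Walks.
Variables (R : realFieldType) (n : nat) (V : point R n -> Prop).

Lemma has_walk0 u : has_walk V u u 0.
Proof. by exists (fun _ => u). Qed.

Lemma has_walk1 u v : poly_edge V u v -> has_walk V u v 1.
Proof. by move=> uv; exists (fun i => if i is 0%N then u else v); do 2 split => //; case. Qed.

Lemma has_walk_cat u y v k1 k2 : has_walk V u y k1 -> has_walk V y v k2 ->
  has_walk V u v (k1 + k2).
Proof.
move=> [f1 [f10 [f1k edges1]]] [f2 [f20 [f2k edges2]]].
exists (fun i => if (i <= k1)%N then f1 i else f2 (i - k1)%N); split => //; split.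
  case: (posnP k2) => [k20 | k2pos]; first by rewrite k20 addn0 leqnn f1k -f2k k20 f20.
  by rewrite leqNgt -{1}(addn0 k1) ltn_add2l k2pos /= addKn.
move=> i ik /=; case: (ltngtP i k1) => [ik1 | k1i | ik1].
- exact: edges1.
- rewrite subSn ?(ltnW k1i) //; apply: edges2.
  lia.
- by subst i; rewrite subSn // subnn f1k -f20; apply: edges2; lia.
Qed.

Lemma graph_dist_of_walk u v k : has_walk V u v k ->
  exists2 j, graph_dist V u v j & (j <= k)%N.
Proof.
move=> walk; have [j [walkj jmin]] := ex_minn_prop (ex_intro _ k walk).
by exists j; [split | apply: jmin].
Qed.

Lemma is_diam_bounded m : (exists u, poly_vertex V u) ->
  (forall u v, poly_vertex V u -> poly_vertex V v -> exists2 k, has_walk V u v k & (k <= m)%N) ->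
  exists d, [/\ is_diam V d, (d <= m)%N & forall u v k, poly_vertex V u -> poly_vertex V v ->
    graph_dist V u v k -> (k <= d)%N].
Proof.
move=> [u0 vu0] walks.
pose P k := exists u v, [/\ poly_vertex V u, poly_vertex V v & graph_dist V u v k].
have Pbound k : P k -> (k <= m)%N.
  move=> [u [v [vu vv [_ kmin]]]]; have [j walkj jm] := walks u v vu vv.
  exact: leq_trans (kmin _ walkj) jm.
have [k0 dist0 _] : exists2 k, graph_dist V u0 u0 k & (k <= 0)%N.
  exact/graph_dist_of_walk/has_walk0.
have [d [[u [v [vu vv distd]]] dmax]] := ex_maxn_prop (ex_intro _ k0 (ex_intro _ u0
  (ex_intro _ u0 (And3 vu0 vu0 dist0)))) Pbound.
have dmax' u' v' k : poly_vertex V u' -> poly_vertex V v' -> graph_dist V u' v' k -> (k <= d)%N.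
  by move=> vu' vv' distk; apply: dmax; exists u', v'.
exists d; split => //; last by apply: Pbound; exists u, v.
split; last by exists u, v.
move=> u' v' vu' vv'; have [j walkj _] := walks u' v' vu' vv'.
have [k distk _] := graph_dist_of_walk walkj.
by exists k; split => //; apply: dmax' distk.
Qed.

End Walks.

Section UpperBound.
Variables (n : nat) (G : rel 'I_n) (R : realFieldType).
Hypothesis treeG : is_tree G.
Local Notation CIM := (@CIM_pts R n G).

Definition vdiff (D1 D2 : rel 'I_n) : {set 'I_n} := [set z | vparents D1 z != vparents D2 z].

Lemma char_imset_vdiff0 D1 D2 : orientation G D1 -> orientation G D2 ->
  vdiff D1 D2 = set0 -> char_imset R D1 = char_imset R D2.
Proof.
move=> o1 o2 /setP vdiff0.
by apply: (char_imset_vparents R o1 o2) => z; apply/eqP; have := vdiff0 z; rewrite !inE => /negbFE.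
Qed.

Lemma vdiff_in_box D1 D2 E : in_box (vparents D1) (vparents D2) E ->
  (#|vdiff D1 E| + #|vdiff E D2| <= #|vdiff D1 D2|)%N.
Proof.
move=> /forallP Ebox.
have disj : vdiff D1 E :&: vdiff E D2 = set0.
  by apply/setP => z; rewrite !inE; case/orP: (Ebox z) => /eqP ->; rewrite eqxx ?andbF.
rewrite -cardsUI disj cards0 addn0; apply: subset_leq_card; apply/subsetP => z.
by rewrite !inE; case/orP: (Ebox z) => /eqP ->; rewrite eqxx /= ?orbF.
Qed.

(* Induction on [vdiff]: either the face exposed by the box of [D1] and [D2] is
   an edge, or it contains a third vertex that splits [vdiff]. *)
Lemma has_walk_vdiff D1 D2 : orientation G D1 -> orientation G D2 ->
  exists2 k, has_walk CIM (char_imset R D1) (char_imset R D2) k & (k <= #|vdiff D1 D2|)%N.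
Proof.
move: {2}#|vdiff D1 D2| (leqnn #|vdiff D1 D2|) => N.
elim: N D1 D2 => [|N IH] D1 D2 dN o1 o2.
  exists 0%N => //; rewrite (char_imset_vdiff0 o1 o2); first exact: has_walk0.
  by apply/eqP; rewrite -cards_eq0 -leqn0.
have [-> | neq] := eqVneq (char_imset R D1) (char_imset R D2).
  by exists 0%N => //; apply: has_walk0.
have vdiff_pos D E : orientation G D -> orientation G E -> char_imset R D != char_imset R E ->
    (0 < #|vdiff D E|)%N.
  by move=> oD oE; rewrite card_gt0; apply: contra => /eqP /(char_imset_vdiff0 oD oE) ->.
case: (classic (exists E, [/\ orientation G E, in_box (vparents D1) (vparents D2) E,
    char_imset R D1 != char_imset R E & char_imset R E != char_imset R D2])).
  move=> [E [oE Ebox n1 n2]]; have vdiff_split := vdiff_in_box Ebox.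
  have [k1 walk1 k1d] : exists2 k, has_walk CIM (char_imset R D1) (char_imset R E) k &
      (k <= #|vdiff D1 E|)%N.
    by apply: IH => //; have := vdiff_pos _ _ oE o2 n2; lia.
  have [k2 walk2 k2d] : exists2 k, has_walk CIM (char_imset R E) (char_imset R D2) k &
      (k <= #|vdiff E D2|)%N.
    by apply: IH => //; have := vdiff_pos _ _ o1 oE n1; lia.
  by exists (k1 + k2)%N; [apply: has_walk_cat walk1 walk2 | lia].
move=> noThird; exists 1%N; last exact: vdiff_pos.
apply/has_walk1/char_imset_edge => // [|E oE Ebox]; first exact/eqP.
case: (eqVneq (char_imset R D1) (char_imset R E)) => [|n1]; first by left.
case: (eqVneq (char_imset R E) (char_imset R D2)) => [|n2]; first by right.
by case: noThird; exists E.
Qed.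

Lemma vdiff_sub_internal D1 D2 : orientation G D1 -> orientation G D2 ->
  (#|vdiff D1 D2| <= num_internal G)%N.
Proof.
move=> o1 o2; apply/subset_leq_card/subsetP => z; rewrite !inE => neq.
have big D : orientation G D -> vparents D z != set0 -> (2 <= #|nbhd G z|)%N.
  move=> oD; rewrite /vparents /big_part; case: ifP => [big _ | _]; last by rewrite eqxx.
  exact: leq_trans big (subset_leq_card (parents_sub_nbhd treeG _ oD)).
case: (eqVneq (vparents D1 z) set0) => [e1 | ]; last exact: big.
by apply: (big _ o2); rewrite -e1 eq_sym.
Qed.

Lemma has_walk_internal u v : poly_vertex CIM u -> poly_vertex CIM v ->
  exists2 k, has_walk CIM u v k & (k <= num_internal G)%N.
Proof.
move=> [/CIM_ptsP [D1 o1 ->] _] [/CIM_ptsP [D2 o2 ->] _].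
have [k walk kd] := has_walk_vdiff o1 o2.
by exists k => //; apply: leq_trans kd (vdiff_sub_internal o1 o2).
Qed.

End UpperBound.

Section ZeroOnePoints.
Variables (R : realFieldType) (n : nat) (V : point R n -> Prop).
Local Open Scope ring_scope.

Definition zero_one (y : point R n) := forall S, y S = 0 \/ y S = 1.

Lemma char_imset_zero_one D : zero_one (char_imset R D).
Proof. by move=> S; rewrite ffunE; case: ifP; [right | left]. Qed.

Lemma in_segment_zero_one u v y : zero_one u -> zero_one v -> zero_one y -> u <> v ->
  in_segment u v y -> y = u \/ y = v.
Proof.
move=> u01 v01 y01 neq [t [/andP [t0 t1] ey]]; subst y.
have [S0 uvS0] : exists S, u S != v S.
  case: (boolP [exists S, u S != v S]) => [/existsP // | /existsPn same].
  by case: neq; apply/ffunP => S; apply/eqP; have := same S; rewrite negbK.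
have yS0 := y01 S0; rewrite ffunE in yS0.
have [-> | ->] : t = 1 \/ t = 0.
  by case: (u01 S0) (v01 S0) uvS0 yS0 => -> [] -> /=; rewrite ?eqxx //; lra.
- by left; apply/ffunP => S; rewrite ffunE; lra.
- by right; apply/ffunP => S; rewrite ffunE; lra.
Qed.

(* Both [y] and [y'] maximize the functional exposing the edge, so [y] lies on it. *)
Lemma poly_edge_zero_one u v y y' : poly_edge V u v -> V y -> V y' ->
  (forall S, y S + y' S = u S + v S) -> zero_one u -> zero_one v -> zero_one y ->
  y = u \/ y = v.
Proof.
move=> [_ [_ [neq [w [wuv [wmax wface]]]]]] Vy Vy' sum u01 v01 y01.
have wsum : dotp w y + dotp w y' = dotp w u + dotp w v.
  by rewrite /dotp -!big_split; apply: eq_bigr => S _ /=; rewrite -!mulrDr sum.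
have := wmax _ Vy; have := wmax _ Vy' => wy' wy.
apply: in_segment_zero_one => //; apply: wface => //; lra.
Qed.

End ZeroOnePoints.

Section Peaks.
Variables a b : nat -> bool.

Definition peak (q : nat -> bool) i : nat := q i && ~~ q i.+1.
Definition peaks (q : nat -> bool) k m := (\sum_(k <= i < m) peak q i)%N.
Definition changes (q : nat -> bool) k m := (\sum_(k <= i < m) (q i != q i.+1 : nat))%N.

Lemma peaks_changes q k m : (k <= m)%N -> (2 * peaks q k m + q m = changes q k m + q k)%N.
Proof.
rewrite /peaks /changes; elim: m => [|m IH] km.
  by move: km; rewrite leqn0 => /eqP ->; rewrite !big_geq.
case: (eqVneq k m.+1) => [-> | ne]; first by rewrite !big_geq.
have km' : (k <= m)%N by rewrite -ltnS ltn_neqAle ne.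
by rewrite !big_nat_recr //=; have := IH km'; rewrite /peak; case: (q m); case: (q m.+1) => /=; lia.
Qed.

Lemma changes_negate k m : (k < m)%N -> a k = b k -> a m = b m ->
  (forall j, (k < j < m)%N -> b j = ~~ a j) -> (changes b k m <= changes a k m + 2)%N.
Proof.
move=> km ak am flip; rewrite /changes.
case: (eqVneq m k.+1) => [em | ne]; first by subst m; rewrite !big_nat1 ak am; lia.
have k1m : (k.+1 < m)%N by rewrite ltn_neqAle eq_sym ne km.
case: m km am flip ne k1m => [//|m] km am flip _ k1m.
rewrite !(big_ltn km) !big_nat_recr //=.
have -> : (\sum_(k.+1 <= i < m) (b i != b i.+1 : nat) =
           \sum_(k.+1 <= i < m) (a i != a i.+1 : nat))%N.
  rewrite !big_nat; apply: eq_bigr => i /andP [ki im].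
  have -> : b i = ~~ a i by apply: flip; rewrite ki ltnW.
  have -> : b i.+1 = ~~ a i.+1 by apply: flip; rewrite leqW.
  by case: (a i); case: (a i.+1).
by have := leq_b1 (b k != b k.+1); have := leq_b1 (b m != b m.+1); lia.
Qed.

Lemma peaks_negate k m : (k < m)%N -> a k = b k -> a m = b m ->
  (forall j, (k < j < m)%N -> b j = ~~ a j) -> (peaks b k m <= peaks a k m + 1)%N.
Proof.
move=> km ak am flip; have := changes_negate km ak am flip.
by have := peaks_changes b (ltnW km); have := peaks_changes a (ltnW km); rewrite ak am; lia.
Qed.

Variable N : nat.

Definition spliced_peaks k := (peaks b 0 k + peaks a k N)%N.

Lemma spliced_peaks_step k m : (k < m <= N)%N -> a k = b k -> a m = b m ->
  (forall j, (k < j < m)%N -> a j != b j) -> (spliced_peaks m <= spliced_peaks k + 1)%N.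
Proof.
move=> /andP [km mN] ak am differ.
have flip j : (k < j < m)%N -> b j = ~~ a j.
  by move/differ; case: (a j); case: (b j).
have := peaks_negate km ak am flip.
have splitb : peaks b 0 m = (peaks b 0 k + peaks b k m)%N.
  by rewrite /peaks -big_cat_nat // ltnW.
have splita : peaks a k N = (peaks a k m + peaks a m N)%N.
  by rewrite /peaks -big_cat_nat // ltnW.
by rewrite /spliced_peaks splitb splita; lia.
Qed.

(* A discrete intermediate value theorem: [spliced_peaks] goes up by at most one
   between consecutive points where [a] and [b] agree. *)
Lemma spliced_peaks_ivt : a 0 = b 0 -> a N = b N ->
  (spliced_peaks 0 + 2 <= spliced_peaks N)%N ->
  exists k, [/\ (k <= N)%N, a k = b k & (spliced_peaks 0 < spliced_peaks k < spliced_peaks N)%N].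
Proof.
move=> a0 aN big.
pose P k := [&& (k <= N)%N, a k == b k & (spliced_peaks 0 < spliced_peaks k)%N].
have exP : exists k, P k by exists N; rewrite /P leqnn aN eqxx /=; lia.
case: (ex_minnP exP) => k1 /and3P [k1N /eqP ak1 lt1] min1.
have k1_gt0 : (0 < k1)%N by case: k1 lt1 {min1 k1N ak1}; rewrite ?ltnn.
pose Q j := (j < k1)%N && (a j == b j).
have exQ : exists j, Q j by exists 0%N; rewrite /Q k1_gt0 a0 eqxx.
have ubQ j : Q j -> (j <= k1)%N by case/andP => /ltnW.
case: (ex_maxnP exQ ubQ) => k0 /andP [k0k1 /eqP ak0] max0.
have le0 : (spliced_peaks k0 <= spliced_peaks 0)%N.
  rewrite leqNgt; apply/negP => lt0; have := min1 k0.
  by rewrite /P ak0 eqxx lt0 (leq_trans (ltnW k0k1) k1N) leqNgt k0k1 => /(_ isT).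
have differ j : (k0 < j < k1)%N -> a j != b j.
  move=> /andP [k0j jk1]; apply/negP => /eqP ajbj.
  by have := max0 j; rewrite /Q jk1 ajbj eqxx leqNgt k0j => /(_ isT).
have := spliced_peaks_step (introT andP (conj k0k1 k1N)) ak0 ak1 differ.
by exists k1; split => //; apply/andP; split => //; lia.
Qed.

Lemma spliced_peaks0 : spliced_peaks 0 = peaks a 0 N.
Proof. by rewrite /spliced_peaks /peaks big_geq. Qed.

Lemma spliced_peaksN : spliced_peaks N = peaks b 0 N.
Proof. by rewrite /spliced_peaks /peaks [X in (_ + X)%N]big_geq ?addn0. Qed.

End Peaks.

Lemma peaks_trim q m : ~~ q 0 -> q m.+1 -> peaks q 0 m.+1 = peaks q 1 m.
Proof.
move=> q0 qm; rewrite /peaks big_ltn // /peak (negbTE q0) add0n.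
case: m qm => [|m] qm; first by rewrite !big_geq.
by rewrite big_nat_recr //= qm andbF addn0.
Qed.

Lemma sum_odd m : (\sum_(0 <= i < m) odd i)%N = m./2.
Proof.
elim: m => [|m IH]; first by rewrite big_geq.
by rewrite big_nat_recr //= IH uphalf_half addnC.
Qed.

Section Splice.
Variables (n : nat) (G : rel 'I_n) (L : pred 'I_n).

Definition splice (A B : rel 'I_n) : rel 'I_n := fun u v => if L u then A u v else B u v.

Definition agree_across (A B : rel 'I_n) : Prop :=
  forall u v, G u v -> L u != L v -> A u v = B u v.

Variables A B : rel 'I_n.
Hypotheses (oA : orientation G A) (oB : orientation G B) (agreeAB : agree_across A B).

Lemma agree_acrossC : agree_across B A.
Proof. by move=> u v Guv Luv; rewrite agreeAB. Qed.

Lemma spliceE u v : splice A B u v = if L v then A u v else B u v.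
Proof.
have nonedge D : orientation G D -> ~~ G u v -> D u v = false.
  by case=> skD _; rewrite skD => /norP [/negbTE].
rewrite /splice; case: (boolP (G u v)) => [Guv | nGuv]; last by rewrite (nonedge A) ?(nonedge B) // !if_same.
case Lu: (L u); case Lv: (L v) => //; rewrite agreeAB ?Lu ?Lv //.
Qed.

Lemma parents_splice z : parents (splice A B) z = if L z then parents A z else parents B z.
Proof. by apply/setP => j; rewrite !inE spliceE; case: (L z); rewrite inE. Qed.

Lemma splice_orientation : orientation G (splice A B).
Proof.
have [skA asymA] := oA; have [skB asymB] := oB; split.
  by move=> u v; rewrite (spliceE v u) /splice; case: (L u); [apply: skA | apply: skB].
by move=> u v; rewrite (spliceE v u) /splice; case: (L u); [apply: asymA | apply: asymB].
Qed.

End Splice.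

Lemma char_imset_splice n (G : rel 'I_n) (L : pred 'I_n) (R : realFieldType) A B :
  orientation G A -> orientation G B -> agree_across G L A B -> forall S,
  (char_imset R (splice L A B) S + char_imset R (splice L B A) S =
   char_imset R A S + char_imset R B S)%R.
Proof.
move=> oA oB agreeAB S; have agreeBA := agree_acrossC agreeAB.
have oAB := splice_orientation oA oB agreeAB; have oBA := splice_orientation oB oA agreeBA.
rewrite (char_imsetE R S oAB) (char_imsetE R S oBA) (char_imsetE R S oA) (char_imsetE R S oB).
rewrite -!big_split /=.
apply: eq_bigr => i _; rewrite (parents_splice oA oB agreeAB) (parents_splice oB oA agreeBA).
by case: (L i); rewrite // addrC.
Qed.

Section KeyOrientations.
Variables (n : nat) (G : rel 'I_n).
Hypothesis treeG : is_tree G.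

Definition orient_by (key : 'I_n -> nat) : rel 'I_n := fun u v => G u v && (key u < key v)%N.

Lemma orient_by_orientation key : injective key -> orientation G (orient_by key).
Proof.
move=> key_inj; split => [u v | u v /andP [_ uv]]; last by rewrite /orient_by negb_and ltnNge (ltnW uv) orbT.
rewrite /orient_by (tree_sym treeG v u); case Guv: (G u v) => //=.
rewrite -neq_ltn (inj_eq key_inj); symmetry; apply: tree_edge_neq treeG _ _ Guv.
Qed.

End KeyOrientations.

Section LongestPath.
Variables (n : nat) (G : rel 'I_n) (R : realFieldType).
Hypothesis treeG : is_tree G.
Local Notation CIM := (@CIM_pts R n G).
Local Open Scope ring_scope.

Lemma collider_head D u w v : orientation G D -> G u w -> G w v -> u != v ->
  [exists j in [set u; w; v], [set u; w; v] \subset parents D j :|: [set j]] =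
  D u w && D v w.
Proof.
move=> [skD asymD] Guw Gwv uv.
have uw := tree_edge_neq treeG Guw; have wv := tree_edge_neq treeG Gwv.
have noTriangle : ~ G v u by move=> Gvu; apply: (tree_triangle_free treeG Guw Gwv Gvu).
apply/existsP/idP => [[j /andP [uwvj /subsetP sub]] | /andP [Duw Dvw]].
  move: uwvj; rewrite !inE => /orP [/orP [] | ] /eqP ej; subst j.
  - have := sub v; rewrite !inE eqxx orbT eq_sym (negbTE uv) !orbF => /(_ isT) Dvu.
    by case: noTriangle; rewrite skD Dvu.
  - have := sub u; have := sub v; rewrite !inE !eqxx !orbT (eq_sym v) (negbTE uw) (negbTE wv).
    by rewrite !orbF => /(_ isT) -> /(_ isT) ->.
  - have := sub u; rewrite !inE eqxx (negbTE uv) !orbF => /(_ isT) Duv.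
    by case: noTriangle; rewrite skD Duv orbT.
exists w; rewrite !inE eqxx orbT /=.
by apply/subsetP => y; rewrite !inE => /orP [/orP [] | ] /eqP ->; rewrite ?Duw ?Dvw ?eqxx ?orbT.
Qed.

Variables (x : 'I_n) (s : seq 'I_n) (p : nat).
Hypotheses (uniq_path : uniq (x :: s)) (pathG : path G x s) (size_path : size s = p).

Definition pv j := nth x (x :: s) j.

Lemma pv_edge j : (j < p)%N -> G (pv j) (pv j.+1).
Proof. by move=> jp; move/(pathP x): pathG => /(_ j); rewrite size_path => /(_ jp). Qed.

Lemma pv_eq i j : (i <= p)%N -> (j <= p)%N -> (pv i == pv j) = (i == j).
Proof. by move=> ip jp; rewrite nth_uniq //= size_path ltnS. Qed.

(* The padding ([false] before the path, [true] after it) makes the peaks of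
   [path_dir D] exactly the colliders of [D] on the path. *)
Definition path_dir (D : rel 'I_n) j : bool :=
  if j == 0%N then false else if (j <= p)%N then D (pv j.-1) (pv j) else true.

Lemma path_dirE D j : (0 < j <= p)%N -> path_dir D j = D (pv j.-1) (pv j).
Proof. by case/andP; rewrite /path_dir; case: j => // j _ ->. Qed.

Lemma path_dir_gt D j : (p < j)%N -> path_dir D j.
Proof. by case: j => // j pj; rewrite /path_dir leqNgt pj. Qed.

Definition colliders D := peaks (path_dir D) 0 p.+1.

Definition collider_triple i : {set 'I_n} := [set pv i.-1; pv i; pv i.+1].

Definition imset_coord (y : point R n) (A : {set 'I_n}) : R := oapp (fun S => y S) 0 (insub A).

Definition collider_functional (y : point R n) : R :=
  \sum_(1 <= i < p) imset_coord y (collider_triple i).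

Lemma imset_coord_collider_triple D i : orientation G D -> (0 < i < p)%N ->
  imset_coord (char_imset R D) (collider_triple i) = (peak (path_dir D) i)%:R.
Proof.
move=> oD /andP [i0 ip].
have Gi := pv_edge ip; have Gi1 : G (pv i.-1) (pv i).
  by have := @pv_edge i.-1; rewrite prednK //; apply; lia.
have ends : pv i.-1 != pv i.+1 by rewrite pv_eq; lia.
rewrite /imset_coord insubT => [|big /=].
  apply: leq_trans (subset_leq_card (_ : [set pv i.-1; pv i] \subset _)).
    by rewrite cards2 (tree_edge_neq treeG Gi1).
  by apply/subsetP => y; rewrite !inE => ->.
rewrite ffunE /= (collider_head oD Gi1 Gi ends) /peak !path_dirE ?i0 ?ip ?(ltnW ip) //=.
by rewrite (orientation_flip oD Gi); case: (_ && _).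
Qed.

Lemma collider_functional_char D : orientation G D ->
  collider_functional (char_imset R D) = (colliders D)%:R.
Proof.
move=> oD; rewrite /colliders peaks_trim //; last exact: path_dir_gt.
rewrite /peaks natr_sum; apply: eq_big_nat => i /andP [i1 ip].
by apply: imset_coord_collider_triple => //; rewrite i1.
Qed.

Lemma colliders_char D E : orientation G D -> orientation G E ->
  char_imset R D = char_imset R E -> colliders D = colliders E.
Proof.
by move=> oD oE DE; apply/eqP; rewrite -(eqr_nat R) -!collider_functional_char // DE.
Qed.

Section Cut.
Variable k : nat.
Hypotheses (k_gt0 : (0 < k)%N) (k_le_p : (k <= p)%N).

Definition cut_edge : rel 'I_n := fun u v =>
  G u v && ~~ ((u == pv k.-1) && (v == pv k) || (u == pv k) && (v == pv k.-1)).

Definition cut_side : pred 'I_n := connect cut_edge (pv k.-1).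

Lemma cut_edge_sym u v : cut_edge u v = cut_edge v u.
Proof.
rewrite /cut_edge (tree_sym treeG); congr (_ && ~~ _).
by rewrite orbC; congr (_ || _); rewrite andbC.
Qed.

Lemma cut_side_edge u v : cut_edge u v -> cut_side u = cut_side v.
Proof.
move=> uv; apply/idP/idP => side; first exact: connect_trans side (connect1 uv).
by rewrite cut_edge_sym in uv; apply: connect_trans side (connect1 uv).
Qed.

Lemma cut_side_crossing u v : G u v -> cut_side u != cut_side v ->
  (u == pv k.-1) && (v == pv k) || (u == pv k) && (v == pv k.-1).
Proof.
move=> Guv sides; have : ~~ cut_edge u v by apply: contra sides => /cut_side_edge ->.
by rewrite /cut_edge Guv negbK.
Qed.

Lemma cut_side_step j : (j < p)%N -> j.+1 != k -> cut_side (pv j) = cut_side (pv j.+1).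
Proof. by move=> jp jk; apply: cut_side_edge; rewrite /cut_edge pv_edge // !pv_eq; lia. Qed.

Lemma cut_side_path i j : (i <= j <= p)%N -> (j < k)%N || (k <= i)%N ->
  cut_side (pv i) = cut_side (pv j).
Proof.
move=> /andP [ij jp] away; elim: j ij jp away => [|j IH] ij jp away.
  by move: ij; rewrite leqn0 => /eqP ->.
case: (eqVneq i j.+1) => [-> // | ne].
by rewrite -(@cut_side_step j); [apply: IH | ..]; lia.
Qed.

(* A path from [pv k.-1] to [pv k] avoiding their edge would close a cycle. *)
Lemma cut_side_pv_k : ~~ cut_side (pv k).
Proof.
apply/negP => /connectP [q pathq lastq].
case: (shortenP pathq) lastq => q' pathq' uniqq' _ lastq'.
have ends : pv k.-1 != pv k by rewrite pv_eq; lia.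
case: q' pathq' uniqq' lastq' => [|z [|z2 q'']] pathq' uniqq' lastq'.
- by move: ends; rewrite lastq' eqxx.
- rewrite /= in lastq'; subst z.
  by move: pathq'; rewrite /= /cut_edge !eqxx /= andbF.
- have cycG : cycle G [:: pv k.-1, z, z2 & q''].
    rewrite /cycle rcons_path -lastq' (tree_sym treeG).
    have -> : G (pv k.-1) (pv k) by have := @pv_edge k.-1; rewrite prednK //; apply; lia.
    by rewrite andbT; apply: sub_path pathq' => u v /andP [].
  by move: (tree_acyclic treeG uniqq'); rewrite cycG => /(_ isT).
Qed.

Lemma cut_side_pv j : (j <= p)%N -> cut_side (pv j) = (j < k)%N.
Proof.
move=> jp; case: (ltnP j k) => jk.
  by rewrite (@cut_side_path j k.-1); [exact: connect0 | lia | lia].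
by rewrite -(@cut_side_path k j); [exact/negbTE/cut_side_pv_k | lia | lia].
Qed.

Lemma agree_across_cut D1 D2 : orientation G D1 -> orientation G D2 ->
  path_dir D1 k = path_dir D2 k -> agree_across G cut_side D1 D2.
Proof.
move=> o1 o2; rewrite !path_dirE ?k_gt0 // => same u v Guv.
case/(cut_side_crossing Guv)/orP => /andP [/eqP -> /eqP ->] //.
have Gk : G (pv k.-1) (pv k) by have := @pv_edge k.-1; rewrite prednK //; apply; lia.
by rewrite (orientation_flip o1 Gk) (orientation_flip o2 Gk) same.
Qed.

Lemma path_dir_splice A B j :
  path_dir (splice cut_side A B) j = if (j <= k)%N then path_dir A j else path_dir B j.
Proof.
rewrite /path_dir; case: (eqVneq j 0%N) => [-> | j0] /=; first by rewrite ?if_same.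
case: (leqP j p) => jp; last by rewrite if_same.
by rewrite /splice cut_side_pv; [rewrite prednK ?lt0n | lia].
Qed.

Lemma colliders_splice D1 D2 : path_dir D1 k = path_dir D2 k ->
  colliders (splice cut_side D2 D1) = spliced_peaks (path_dir D1) (path_dir D2) p.+1 k.
Proof.
move=> same; rewrite /colliders /spliced_peaks /peaks (@big_cat_nat _ _ _ k) //=; last lia.
congr (_ + _)%N; apply: eq_big_nat => i /andP [ki ik]; rewrite /peak !path_dir_splice.
  by rewrite (ltnW ik) ik.
rewrite ltnNge ki /=; case: (leqP i k) => // ik'.
have -> : i = k by apply/eqP; rewrite eqn_leq ik' ki.
by rewrite same.
Qed.

End Cut.

Lemma colliders_edge D1 D2 : orientation G D1 -> orientation G D2 ->
  poly_edge CIM (char_imset R D1) (char_imset R D2) -> (colliders D2 <= colliders D1 + 1)%N.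
Proof.
move=> o1 o2 edge; rewrite leqNgt /colliders; apply/negP => jump.
have a0 : path_dir D1 0 = path_dir D2 0 by [].
have aN : path_dir D1 p.+1 = path_dir D2 p.+1 by rewrite !path_dir_gt.
have big : (spliced_peaks (path_dir D1) (path_dir D2) p.+1 0 + 2 <=
            spliced_peaks (path_dir D1) (path_dir D2) p.+1 p.+1)%N.
  by rewrite spliced_peaks0 spliced_peaksN; lia.
have [k [kp same /andP [lo hi]]] := spliced_peaks_ivt a0 aN big.
have k0 : (0 < k)%N by case: k lo {kp same hi} => //; rewrite spliced_peaks0 ltnn.
have kp' : (k <= p)%N by rewrite -ltnS ltn_neqAle kp andbT; apply: contraTneq hi => ->; rewrite spliced_peaksN ltnn.
have agree21 := agree_across_cut k0 kp' o2 o1 (esym same).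
have o3 := splice_orientation o2 o1 agree21.
have o4 := splice_orientation o1 o2 (agree_acrossC agree21).
have sum S := char_imset_splice R o2 o1 agree21 S.
have [e | e] := poly_edge_zero_one edge (CIM_pts_char R treeG o3) (CIM_pts_char R treeG o4)
  (fun S => etrans (sum S) (addrC _ _)) (char_imset_zero_one R D1) (char_imset_zero_one R D2)
  (char_imset_zero_one R _).
- by move: lo; rewrite -(colliders_splice k0 kp' same) (colliders_char o3 o1 e) spliced_peaks0 ltnn.
- by move: hi; rewrite -(colliders_splice k0 kp' same) (colliders_char o3 o2 e) spliced_peaksN ltnn.
Qed.

Lemma colliders_walk D1 D2 k : orientation G D1 -> orientation G D2 ->
  has_walk CIM (char_imset R D1) (char_imset R D2) k -> (colliders D2 <= colliders D1 + k)%N.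
Proof.
move=> o1 o2 [f [f0 [fk edges]]].
suff walk_bound i : (i <= k)%N -> exists2 E, orientation G E &
    f i = char_imset R E /\ (colliders E <= colliders D1 + i)%N.
  have [E oE [fkE bound]] := walk_bound k (leqnn k).
  by rewrite (colliders_char o2 oE) // -fkE.
elim: i => [_ | i IH ik]; first by exists D1; rewrite ?f0 ?addn0.
have [E oE [fiE bound]] := IH (ltnW ik).
have [_ [[/CIM_ptsP [E' oE' fi1E'] _] _]] := edges i ik.
exists E' => //; split => //; have := colliders_edge oE oE'.
by rewrite -fiE -fi1E' => /(_ (edges i ik)); lia.
Qed.

Lemma path_lt_n : (p < n)%N.
Proof.
have /card_uniqP := uniq_path; rewrite /= size_path => <-.
by have := max_card (mem (x :: s)); rewrite card_ord.
Qed.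

Definition path_key (g : nat -> nat) (y : 'I_n) : nat :=
  if y \in x :: s then g (index y (x :: s)) else (2 * n + y)%N.

Lemma path_key_inj g : (forall i j, (i < n)%N -> (j < n)%N -> g i = g j -> i = j) ->
  (forall i, (i < n)%N -> (g i < 2 * n)%N) -> injective (path_key g).
Proof.
move=> g_inj g_lt.
have index_lt y : y \in x :: s -> (index y (x :: s) < n)%N.
  by rewrite -index_mem /= size_path => /leq_trans; apply; apply: path_lt_n.
move=> u v; rewrite /path_key; case: ifP => uxs; case: ifP => vxs.
- by move/g_inj => /(_ (index_lt _ uxs) (index_lt _ vxs)) /(congr1 (nth x (x :: s))); rewrite !nth_index.
- by move=> e; have := g_lt _ (index_lt _ uxs); rewrite e ltnNge leq_addr.
- by move=> e; have := g_lt _ (index_lt _ vxs); rewrite -e ltnNge leq_addr.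
- by move=> e; apply: ord_inj; lia.
Qed.

Lemma path_dir_path_key g j : (0 < j <= p)%N ->
  path_dir (orient_by G (path_key g)) j = (g j.-1 < g j)%N.
Proof.
move=> /andP [j0 jp]; rewrite path_dirE ?j0 // /orient_by /path_key.
have pv_in i : (i <= p)%N -> pv i \in x :: s by move=> ip; rewrite mem_nth //= size_path.
have index_pv i : (i <= p)%N -> index (pv i) (x :: s) = i.
  by move=> ip; rewrite index_uniq //= size_path.
have Gj : G (pv j.-1) (pv j) by have := @pv_edge j.-1; rewrite prednK //; apply; lia.
by rewrite Gj !pv_in ?index_pv // (leq_trans (leq_pred j)).
Qed.

Definition increasing_orientation := orient_by G (path_key id).
Definition alternating_orientation :=
  orient_by G (path_key (fun j => if odd j then (n + j)%N else j)).

Lemma increasing_orientationP : orientation G increasing_orientation.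
Proof. by apply/(orient_by_orientation treeG)/path_key_inj => // i; lia. Qed.

Lemma alternating_orientationP : orientation G alternating_orientation.
Proof.
apply/(orient_by_orientation treeG)/path_key_inj => [i j | i] ilt;
  by case: (odd i) => [|]; first [move=> jlt; case: (odd j) | idtac]; lia.
Qed.

Lemma colliders_increasing : colliders increasing_orientation = 0%N.
Proof.
rewrite /colliders /peaks big1_seq // => i _; rewrite /peak.
have -> : path_dir increasing_orientation i.+1.
  by case: (leqP i.+1 p) => ip; [rewrite path_dir_path_key ?ip | apply: path_dir_gt].
by rewrite andbF.
Qed.

Lemma colliders_alternating : colliders alternating_orientation = p./2.
Proof.
have dir j : (j <= p)%N -> path_dir alternating_orientation j = odd j.
  case: j => // j jp; rewrite path_dir_path_key ?jp //=.
  by have := path_lt_n; case: (odd j) => /=; lia.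
rewrite /colliders /peaks big_nat_recr //= {2}/peak.
have -> : path_dir alternating_orientation p.+1 by apply: path_dir_gt.
rewrite andbF addn0 -sum_odd.
by apply: eq_big_nat => i /andP [_ ip]; rewrite /peak !dir ?(ltnW ip) //= negbK andbb.
Qed.

End LongestPath.

Theorem mainTheorem5 (R : realFieldType) (n : nat) (G : rel 'I_n) (p : nat) :
  is_tree G ->
  longest_path_length G p ->
  exists d : nat, is_diam (@CIM_pts R n G) d /\
    (p./2 <= d)%N /\ (d <= num_internal G)%N.
Proof.
move=> treeG [[x [s [uniq_path [pathG size_path]]]] _].
have oI := increasing_orientationP treeG uniq_path pathG size_path.
have oA := alternating_orientationP treeG uniq_path pathG size_path.
have vI := char_imset_vertex R treeG oI; have vA := char_imset_vertex R treeG oA.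
have [d [diam d_le d_max]] := is_diam_bounded (ex_intro _ _ vI) (has_walk_internal treeG).
exists d; split => //; split => //.
have [k walk _] := has_walk_internal treeG vI vA.
have [j distj _] := graph_dist_of_walk walk.
apply: leq_trans (d_max _ _ _ vI vA distj).
have := colliders_walk treeG uniq_path pathG size_path oI oA (proj1 distj).
by rewrite (colliders_increasing uniq_path pathG size_path) (colliders_alternating uniq_path pathG size_path).
Qed.
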